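(* Let $a,b,c,d>0$. Then \[ \frac12\,\frac{\left(a^{2}d^{2}-b^{2}c^{2}\right)^{2}}{a^{2}d^{2}+b^{2}c^{2}}+\left(a^{2}-b^{2}\right)\left(c^{2}-d^{2}\right)\le (ac-bd)^{2}. \] *)

From Stdlib Require Import Reals.

(* With p = ad and q = bc, one has (ac - bd)^2 - (a^2 - b^2)(c^2 - d^2) = (p - q)^2, so the claim
   reads (p^2 - q^2)^2 / (2 (p^2 + q^2)) <= (p - q)^2.  Since (p + q)^2 <= 2 (p^2 + q^2), the gap
   is (p - q)^4 / (2 (p^2 + q^2)) >= 0. *)
From Stdlib Require Import Reals.
From Stdlib Require Import Lra.
Open Scope R_scope.

Lemma sqr_diff_sub_prod_diff_sqr (a b c d : R) :
  (a * c - b * d)^2 - (a^2 - b^2) * (c^2 - d^2) = (a * d - b * c)^2.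
Proof. ring. Qed.

Lemma sqr_diff_sub_half_sqr_diff_sqr (p q : R) : p^2 + q^2 <> 0 ->
  (p - q)^2 - (1/2) * ((p^2 - q^2)^2 / (p^2 + q^2)) = (p - q)^4 / (2 * (p^2 + q^2)).
Proof. intros hS. field. exact hS. Qed.

Lemma half_sqr_diff_sqr_le (p q : R) : 0 < p^2 + q^2 ->
  (1/2) * ((p^2 - q^2)^2 / (p^2 + q^2)) <= (p - q)^2.
Proof.
  intros hS.
  assert (hgap : 0 <= (p - q)^4 / (2 * (p^2 + q^2))).
  { unfold Rdiv; apply Rmult_le_pos.
    - replace ((p - q)^4) with (((p - q)^2)^2) by ring.
      apply pow2_ge_0.
    - apply Rlt_le, Rinv_0_lt_compat; lra. }
  rewrite <- sqr_diff_sub_half_sqr_diff_sqr in hgap; lra.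
Qed.

Theorem lemma4p4 (a b c d : R) (ha : 0 < a) (hb : 0 < b) (hc : 0 < c) (hd : 0 < d) :
  (1/2) * ((a^2 * d^2 - b^2 * c^2)^2 / (a^2 * d^2 + b^2 * c^2))
    + (a^2 - b^2) * (c^2 - d^2) <= (a * c - b * d)^2.
Proof.
  assert (hS : 0 < (a * d)^2 + (b * c)^2).
  { assert (0 < a * d) by (apply Rmult_lt_0_compat; assumption).
    assert (0 <= (b * c)^2) by apply pow2_ge_0.
    assert (0 < (a * d)^2) by (apply pow_lt; assumption).
    lra. }
  pose proof (half_sqr_diff_sqr_le (a * d) (b * c) hS) as hle.
  pose proof (sqr_diff_sub_prod_diff_sqr a b c d) as hid.
  rewrite !Rpow_mult_distr in hle.
  lra.
Qed.
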